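(* For finite $W\subset\mathbb{Z}^2$ let $D(W)$ denote the set of integer points in the Euclidean convex hull of $W$. Let $D_1=D(\{(-3,0),(0,3),(1,2),(-2,-1)\})$, $D_2=D(\{(1,2),(3,0),(2,-1),(0,1)\})$, $D_3=D(\{(2,-1),(0,-3),(-1,-2),(1,0)\})$, $D_4=D(\{(-1,-2),(-2,-1),(-1,0),(0,-1)\})$, $D_5=D(\{(5,0),(7,2),(8,1),(6,-1)\})$, $D_6=D(\{(7,2),(8,3),(9,2),(9,0)\})$, $D_7=D(\{(9,0),(9,-2),(8,-3),(7,-2)\})$, $D_8=D(\{(7,-2),(6,-1),(7,0),(8,-1)\})$, and let $X=\{(4,0)\}\cup\bigcup_{i=1}^8 D_i$. Then $$B'=\{(-3,0),(0,-3),(0,3),(8,-3),(8,3),(9,-2),(9,-1),(9,1),(9,2)\}$$ is a minimal freezing set for $(X,c_2)$.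
   Context: For $x\neq y$ in $\mathbb{Z}^2$, $x,y$ are $c_2$-adjacent if each coordinate differs by at most 1. $f:X\to X$ is $c_2$-continuous ($f\in C(X,c_2)$) if whenever $x,x'$ are $c_2$-adjacent, $f(x)$ and $f(x')$ are equal or $c_2$-adjacent. $\mathrm{Fix}(f)=\{x:f(x)=x\}$. $A\subset X$ is a freezing set for $(X,c_2)$ if every $f\in C(X,c_2)$ with $A\subset\mathrm{Fix}(f)$ is the identity on $X$; it is minimal if no proper subset of $A$ is a freezing set. *)

From Stdlib Require Import Reals ZArith List.
Import ListNotations.
Open Scope Z_scope.

Definition pt : Type := (Z * Z)%type.

Definition c2_adj (x y : pt) : Prop :=
  x <> y /\ Z.abs (fst x - fst y) <= 1 /\ Z.abs (snd x - snd y) <= 1.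

(* f : X -> X (encoded as f : pt -> pt mapping X into X; values off X are
   irrelevant) that is c_2-continuous. *)
Definition c2_continuous (X : pt -> Prop) (f : pt -> pt) : Prop :=
  (forall x, X x -> X (f x)) /\
  (forall x y, X x -> X y -> c2_adj x y -> f x = f y \/ c2_adj (f x) (f y)).

Definition freezing_set (X A : pt -> Prop) : Prop :=
  (forall a, A a -> X a) /\
  (forall f, c2_continuous X f -> (forall a, A a -> f a = a) ->
     forall x, X x -> f x = x).

Definition minimal_freezing_set (X A : pt -> Prop) : Prop :=
  freezing_set X A /\
  (forall A' : pt -> Prop, (forall a, A' a -> A a) -> (exists a, A a /\ ~ A' a) ->
     ~ freezing_set X A').

Definition in_conv_hull (W : list pt) (p : pt) : Prop :=
  exists c : nat -> R,
    (forall i, (i < length W)%nat -> (0 <= c i)%R) /\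
    fold_right Rplus 0%R (map c (seq 0 (length W))) = 1%R /\
    fold_right Rplus 0%R
      (map (fun i => (c i * IZR (fst (nth i W (0%Z, 0%Z))))%R) (seq 0 (length W)))
      = IZR (fst p) /\
    fold_right Rplus 0%R
      (map (fun i => (c i * IZR (snd (nth i W (0%Z, 0%Z))))%R) (seq 0 (length W)))
      = IZR (snd p).

Definition D (W : list pt) : pt -> Prop := fun p => in_conv_hull W p.

Definition D1 := D [(-3, 0); (0, 3); (1, 2); (-2, -1)].
Definition D2 := D [(1, 2); (3, 0); (2, -1); (0, 1)].
Definition D3 := D [(2, -1); (0, -3); (-1, -2); (1, 0)].
Definition D4 := D [(-1, -2); (-2, -1); (-1, 0); (0, -1)].
Definition D5 := D [(5, 0); (7, 2); (8, 1); (6, -1)].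
Definition D6 := D [(7, 2); (8, 3); (9, 2); (9, 0)].
Definition D7 := D [(9, 0); (9, -2); (8, -3); (7, -2)].
Definition D8 := D [(7, -2); (6, -1); (7, 0); (8, -1)].

Definition X6 : pt -> Prop := fun p =>
  p = (4, 0) \/ D1 p \/ D2 p \/ D3 p \/ D4 p \/ D5 p \/ D6 p \/ D7 p \/ D8 p.

Definition B' : pt -> Prop := fun p =>
  In p [(-3, 0); (0, -3); (0, 3); (8, -3); (8, 3); (9, -2); (9, -1); (9, 1); (9, 2)].

(* X6 is finite, so the proof reduces the statement to finitely many checks,
   each justified by a general lemma and then run by vm_compute.
   1. Integer hulls.  A point of the convex hull of W satisfies every affine
      inequality that holds on W (hull_halfplane), so the integer points of
      D(W) lie in the explicit list hull_points W.  Conversely an integer point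
      of a triangle spanned by vertices of a quadrilateral W lies in D(W), with
      explicit barycentric coordinates (in_quadb_sound).  Hence X6 is exactly
      the 45-point list X6_points (X6_points_spec).
   2. Freezing.  For a continuous f fixing A, every x has f x among finitely
      many candidates, and a candidate for x survives only if each neighbour of
      x keeps a candidate equal or adjacent to it.  Pruning candidates this way,
      starting from A pinned to itself, until every point of X keeps only
      itself shows that A is freezing (freezing_by_propagation).
   3. Minimality.  For every a in B' an explicit continuous self-map of X6 fixes
      B' \ {a} and moves a (minimal_by_witnesses, witnessb_sound). *)

From Stdlib Require Import Reals ZArith List Lra Lia Bool.
Import ListNotations.
Open Scope Z_scope.

Definition pt_eq_dec (a b : pt) : {a = b} + {a <> b}.
Proof. decide equality; apply Z.eq_dec. Defined.

Definition pt_eqb (a b : pt) : bool := if pt_eq_dec a b then true else false.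

Lemma pt_eqb_spec (a b : pt) : pt_eqb a b = true <-> a = b.
Proof. unfold pt_eqb; destruct (pt_eq_dec a b); split; congruence. Qed.

Definition memb (p : pt) (l : list pt) : bool := existsb (pt_eqb p) l.

Lemma memb_spec (p : pt) (l : list pt) : memb p l = true <-> In p l.
Proof.
  unfold memb. rewrite existsb_exists. split.
  - intros (q & Hq & E). apply pt_eqb_spec in E. now subst.
  - intros Hp. exists p. split; [exact Hp|]. now apply pt_eqb_spec.
Qed.

Definition c2_adjb (a b : pt) : bool :=
  negb (pt_eqb a b) && (Z.abs (fst a - fst b) <=? 1) && (Z.abs (snd a - snd b) <=? 1).

Lemma c2_adjb_spec (a b : pt) : c2_adjb a b = true <-> c2_adj a b.
Proof.
  unfold c2_adjb, c2_adj. rewrite !andb_true_iff, negb_true_iff, !Z.leb_le.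
  unfold pt_eqb. destruct (pt_eq_dec a b); intuition congruence.
Qed.

Definition Rsum (l : list nat) (F : nat -> R) : R := fold_right Rplus 0%R (map F l).

Lemma Rsum_affine (l : list nat) (F G H : nat -> R) (a b c : R) :
  Rsum l (fun i => a * F i + b * G i + c * H i)%R
  = (a * Rsum l F + b * Rsum l G + c * Rsum l H)%R.
Proof. unfold Rsum; induction l as [|i l IH]; simpl; [ring|]. rewrite IH; ring. Qed.

Lemma Rsum_nonneg (l : list nat) (F : nat -> R) :
  (forall i, In i l -> (0 <= F i)%R) -> (0 <= Rsum l F)%R.
Proof.
  unfold Rsum; induction l as [|i l IH]; simpl; intros HF; [lra|].
  assert (0 <= F i)%R by auto.
  assert (0 <= fold_right Rplus 0 (map F l))%R by auto. lra.
Qed.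

Definition affine : Type := (Z * Z * Z)%type.

Definition eval_affine (L : affine) (p : pt) : Z :=
  let '(a, b, c) := L in a * fst p + b * snd p + c.

(* Half-planes are convex: an affine inequality valid on W is valid on its hull,
   since its value at a convex combination is the same combination of values. *)
Lemma hull_halfplane (W : list pt) (L : affine) (p : pt) :
  (forall w, In w W -> 0 <= eval_affine L w) ->
  in_conv_hull W p -> 0 <= eval_affine L p.
Proof.
  destruct L as [[a b] c]; simpl. intros HW (k & Hk & Hsum & Hx & Hy).
  set (n := length W) in *. set (q i := nth i W (0, 0)).
  change (Rsum (seq 0 n) k = 1%R) in Hsum.
  change (Rsum (seq 0 n) (fun i => k i * IZR (fst (q i)))%R = IZR (fst p)) in Hx.
  change (Rsum (seq 0 n) (fun i => k i * IZR (snd (q i)))%R = IZR (snd p)) in Hy.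
  assert (Hcomb : IZR (a * fst p + b * snd p + c)
    = Rsum (seq 0 n) (fun i => k i * IZR (a * fst (q i) + b * snd (q i) + c))%R).
  { rewrite !plus_IZR, !mult_IZR, <- Hx, <- Hy, <- (Rmult_1_r (IZR c)), <- Hsum.
    rewrite <- Rsum_affine. unfold Rsum. f_equal.
    apply map_ext; intro i. rewrite !plus_IZR, !mult_IZR. ring. }
  apply le_IZR. rewrite Hcomb. apply Rsum_nonneg. intros i Hi.
  apply in_seq in Hi. apply Rmult_le_pos; [apply Hk; lia|].
  apply IZR_le, HW, nth_In; lia.
Qed.

(* The functional p |-> cross(v - u, p - u), which vanishes on the line uv. *)
Definition line_through (u v : pt) : affine :=
  (snd u - snd v, fst v - fst u, (snd v - snd u) * fst u - (fst v - fst u) * snd u).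

Definition opp_affine (L : affine) : affine :=
  let '(a, b, c) := L in (- a, - b, - c).

(* Lines through two vertices of W, oriented so as to be nonnegative on W;
   for a convex polygon these include all its edges. *)
Definition supporting_halfplanes (W : list pt) : list affine :=
  filter (fun L => forallb (fun w => 0 <=? eval_affine L w) W)
    (flat_map (fun u => flat_map (fun v =>
       [line_through u v; opp_affine (line_through u v)]) W) W).

Definition Zrange (lo hi : Z) : list Z :=
  map (fun k => lo + Z.of_nat k) (seq 0 (Z.to_nat (hi - lo + 1))).

Lemma in_Zrange (lo hi z : Z) : lo <= z <= hi -> In z (Zrange lo hi).
Proof.
  intros Hz. apply in_map_iff. exists (Z.to_nat (z - lo)).
  split; [lia|]. apply in_seq. lia.
Qed.

Definition list_min (l : list Z) : Z := fold_right Z.min (hd 0 l) l.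
Definition list_max (l : list Z) : Z := fold_right Z.max (hd 0 l) l.

Lemma list_min_le (l : list Z) (z : Z) : In z l -> list_min l <= z.
Proof.
  unfold list_min. generalize (hd 0 l) as d.
  induction l as [|x l IH]; simpl; intros d Hz; [contradiction|].
  destruct Hz as [<-|Hz]; [lia|]. specialize (IH d Hz). lia.
Qed.

Lemma list_max_ge (l : list Z) (z : Z) : In z l -> z <= list_max l.
Proof.
  unfold list_max. generalize (hd 0 l) as d.
  induction l as [|x l IH]; simpl; intros d Hz; [contradiction|].
  destruct Hz as [<-|Hz]; [lia|]. specialize (IH d Hz). lia.
Qed.

Definition bounding_box (W : list pt) : list pt :=
  list_prod (Zrange (list_min (map fst W)) (list_max (map fst W)))
            (Zrange (list_min (map snd W)) (list_max (map snd W))).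

Lemma hull_in_bounding_box (W : list pt) (p : pt) :
  in_conv_hull W p -> In p (bounding_box W).
Proof.
  intros Hp.
  set (xlo := list_min (map fst W)); set (xhi := list_max (map fst W)).
  set (ylo := list_min (map snd W)); set (yhi := list_max (map snd W)).
  assert (Hvert : forall w, In w W -> xlo <= fst w <= xhi /\ ylo <= snd w <= yhi).
  { intros w Hw. repeat split;
      [apply list_min_le | apply list_max_ge | apply list_min_le | apply list_max_ge];
      apply in_map, Hw. }
  unfold bounding_box; fold xlo xhi ylo yhi; clearbody xlo xhi ylo yhi.
  assert (Hbound : forall L : affine, (forall w, xlo <= fst w <= xhi /\ ylo <= snd w <= yhi ->
            0 <= eval_affine L w) -> 0 <= eval_affine L p).
  { intros L HL. apply (hull_halfplane W L p); [|exact Hp].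
    intros w Hw. apply HL, Hvert, Hw. }
  assert (Hxlo := Hbound (1, 0, - xlo) ltac:(intros w Hw; cbn [eval_affine]; lia)).
  assert (Hxhi := Hbound (-1, 0, xhi) ltac:(intros w Hw; cbn [eval_affine]; lia)).
  assert (Hylo := Hbound (0, 1, - ylo) ltac:(intros w Hw; cbn [eval_affine]; lia)).
  assert (Hyhi := Hbound (0, -1, yhi) ltac:(intros w Hw; cbn [eval_affine]; lia)).
  cbn [eval_affine] in Hxlo, Hxhi, Hylo, Hyhi.
  destruct p as [x y]; cbn [fst snd] in *. apply in_prod; apply in_Zrange; lia.
Qed.

Definition hull_points (W : list pt) : list pt :=
  filter (fun q => forallb (fun L => 0 <=? eval_affine L q) (supporting_halfplanes W))
    (bounding_box W).

Lemma hull_points_complete (W : list pt) (p : pt) :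
  in_conv_hull W p -> In p (hull_points W).
Proof.
  intros Hp. apply filter_In. split; [now apply hull_in_bounding_box|].
  apply forallb_forall. intros L HL. apply Z.leb_le.
  apply (hull_halfplane W L p); [|exact Hp]. intros w Hw.
  apply filter_In in HL as [_ HL]. rewrite forallb_forall in HL.
  apply Z.leb_le, HL, Hw.
Qed.

(* Twice the signed area of the triangle uvw. *)
Definition cross (u v w : pt) : Z :=
  (fst v - fst u) * (snd w - snd u) - (snd v - snd u) * (fst w - fst u).

(* p lies in the nondegenerate triangle abc: the three sub-triangles obtained
   by replacing a vertex with p have the orientation of abc (or are flat). *)
Definition in_triangleb (a b c p : pt) : bool :=
  let d := cross a b c in
  negb (d =? 0) && (0 <=? cross p b c * d) && (0 <=? cross a p c * d)
  && (0 <=? cross a b p * d).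

(* Cramer's rule: the coordinates of p in the triangle are the ratios of the
   sub-triangle areas to the area of abc. *)
Lemma barycentric (a b c p : pt) : in_triangleb a b c p = true ->
  exists la lb lc : R, (0 <= la /\ 0 <= lb /\ 0 <= lc /\ la + lb + lc = 1 /\
    la * IZR (fst a) + lb * IZR (fst b) + lc * IZR (fst c) = IZR (fst p) /\
    la * IZR (snd a) + lb * IZR (snd b) + lc * IZR (snd c) = IZR (snd p))%R.
Proof.
  unfold in_triangleb. rewrite !andb_true_iff, negb_true_iff, Z.eqb_neq, !Z.leb_le.
  intros [[[Hd Ha] Hb] Hc].
  set (d := cross a b c) in *.
  assert (Hsum : cross p b c + cross a p c + cross a b p = d) by (unfold d, cross; ring).
  assert (Hx : cross p b c * fst a + cross a p c * fst b + cross a b p * fst c = d * fst p)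
    by (unfold d, cross; ring).
  assert (Hy : cross p b c * snd a + cross a p c * snd b + cross a b p * snd c = d * snd p)
    by (unfold d, cross; ring).
  assert (Rd : IZR d <> 0%R) by (apply not_0_IZR; exact Hd).
  assert (Hpos : forall e, 0 <= e * d -> (0 <= IZR e / IZR d)%R).
  { intros e He. replace (IZR e / IZR d)%R with (IZR (e * d) / (IZR d * IZR d))%R
      by (rewrite mult_IZR; field; exact Rd).
    assert (0 < IZR d * IZR d)%R by (destruct (Rlt_or_le (IZR d) 0); nra).
    unfold Rdiv. apply Rmult_le_pos; [now apply IZR_le | left; now apply Rinv_0_lt_compat]. }
  exists (IZR (cross p b c) / IZR d)%R, (IZR (cross a p c) / IZR d)%R,
    (IZR (cross a b p) / IZR d)%R.
  apply (f_equal IZR) in Hsum, Hx, Hy. rewrite !plus_IZR in Hsum, Hx, Hy.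
  rewrite !mult_IZR in Hx, Hy.
  repeat split; try (apply Hpos; assumption).
  - unfold Rdiv. rewrite <- !Rmult_plus_distr_r, Hsum. exact (Rinv_r _ Rd).
  - apply (Rmult_eq_reg_l (IZR d)); [rewrite <- Hx; field; exact Rd | exact Rd].
  - apply (Rmult_eq_reg_l (IZR d)); [rewrite <- Hy; field; exact Rd | exact Rd].
Qed.

Definition in_quadb (W : list pt) (p : pt) : bool :=
  match W with
  | [a; b; c; d] => in_triangleb a b c p || in_triangleb a c d p
  | _ => false
  end.

Lemma in_quadb_sound (W : list pt) (p : pt) : in_quadb W p = true -> in_conv_hull W p.
Proof.
  destruct W as [|a [|b [|c [|d [|]]]]]; try discriminate.
  simpl. rewrite orb_true_iff. unfold in_conv_hull; cbn [length seq map fold_right nth].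
  intros [Habc|Hacd].
  - destruct (barycentric a b c p Habc) as (la & lb & lc & H).
    exists (fun i : nat => match i with O => la | 1%nat => lb | 2%nat => lc | _ => 0%R end).
    split; [intros [|[|[|]]] _; lra | repeat split; lra].
  - destruct (barycentric a c d p Hacd) as (la & lc & ld & H).
    exists (fun i : nat => match i with O => la | 1%nat => 0%R | 2%nat => lc | _ => ld end).
    split; [intros [|[|[|]]] _; lra | repeat split; lra].
Qed.

Lemma minimal_by_witnesses (X : pt -> Prop) (A : list pt) :
  freezing_set X (fun a => In a A) ->
  (forall a, In a A -> exists g, c2_continuous X g /\ g a <> a /\
     forall b, In b A -> b <> a -> g b = b) ->
  minimal_freezing_set X (fun a => In a A).
Proof.
  intros Hfreeze Hwit. split; [exact Hfreeze|].
  intros A' HA' (a & Ha & Hna) [_ Hfreeze'].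
  destruct (Hwit a Ha) as (g & Hg & Hmove & Hfix).
  apply Hmove, (Hfreeze' g Hg).
  - intros b Hb. apply Hfix; [now apply HA'|]. intros ->. contradiction.
  - now apply (proj1 Hfreeze).
Qed.

Section FiniteDigitalImage.

Variable X : pt -> Prop.
Variable points : list pt.
Hypothesis X_points : forall p, X p <-> In p points.

Definition continuousb (f : pt -> pt) : bool :=
  forallb (fun x => memb (f x) points &&
    forallb (fun y => negb (c2_adjb x y) || pt_eqb (f x) (f y) || c2_adjb (f x) (f y))
      points) points.

Lemma continuousb_sound (f : pt -> pt) : continuousb f = true -> c2_continuous X f.
Proof.
  unfold continuousb. rewrite forallb_forall. intros Hf. split.
  - intros x Hx. apply X_points in Hx. apply Hf, andb_true_iff in Hx as [Hin _].
    apply X_points, memb_spec, Hin.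
  - intros x y Hx Hy Hxy. apply X_points in Hx, Hy.
    apply Hf, andb_true_iff in Hx as [_ Hcont]. rewrite forallb_forall in Hcont.
    specialize (Hcont y Hy). apply c2_adjb_spec in Hxy. rewrite Hxy in Hcont.
    simpl in Hcont. apply orb_true_iff in Hcont as [E|E].
    + left. now apply pt_eqb_spec.
    + right. now apply c2_adjb_spec.
Qed.

(* Candidate images: lookup d x lists the possible values of f x; a point
   without an entry may be sent anywhere in X. *)
Definition domains : Type := list (pt * list pt).

Fixpoint lookup (d : domains) (x : pt) : list pt :=
  match d with
  | [] => points
  | (k, l) :: d' => if pt_eq_dec x k then l else lookup d' x
  end.

Lemma lookup_map (g : pt -> list pt) (l : list pt) (x : pt) :
  In x l -> lookup (map (fun y => (y, g y)) l) x = g x.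
Proof.
  induction l as [|y l IH]; simpl; [tauto|].
  intros [->|Hx]; [now destruct (pt_eq_dec x x)|].
  destruct (pt_eq_dec x y) as [->|_]; auto.
Qed.

Definition consistent (f : pt -> pt) (d : domains) : Prop :=
  forall x, In x points -> In (f x) (lookup d x).

(* A candidate u for x is supported if every neighbour y of x still has a
   candidate equal or adjacent to u, as continuity of f requires. *)
Definition supported (d : domains) (x u : pt) : bool :=
  forallb (fun y => negb (c2_adjb x y)
    || existsb (fun v => pt_eqb u v || c2_adjb u v) (lookup d y)) points.

Definition refine (d : domains) : domains :=
  map (fun x => (x, filter (supported d x) (lookup d x))) points.

Lemma refine_consistent (f : pt -> pt) (d : domains) :
  c2_continuous X f -> consistent f d -> consistent f (refine d).
Proof.
  intros [_ Hcont] Hd x Hx. unfold refine. rewrite lookup_map by exact Hx.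
  apply filter_In. split; [now apply Hd|].
  apply forallb_forall. intros y Hy.
  destruct (c2_adjb x y) eqn:Hxy; [simpl|reflexivity].
  apply existsb_exists. exists (f y). split; [now apply Hd|].
  apply c2_adjb_spec in Hxy.
  destruct (Hcont x y (proj2 (X_points x) Hx) (proj2 (X_points y) Hy) Hxy) as [E|E].
  - rewrite E. unfold pt_eqb. now destruct (pt_eq_dec (f y) (f y)).
  - apply c2_adjb_spec in E. rewrite E. apply orb_true_r.
Qed.

Lemma iterate_consistent (f : pt -> pt) (d : domains) (n : nat) :
  c2_continuous X f -> consistent f d -> consistent f (Nat.iter n refine d).
Proof.
  intros Hf Hd. induction n as [|n IH]; simpl; [exact Hd|].
  now apply refine_consistent.
Qed.

Definition pinned (A : list pt) : domains := map (fun a => (a, [a])) A.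

Lemma pinned_consistent (f : pt -> pt) (A : list pt) :
  c2_continuous X f -> (forall a, In a A -> f a = a) -> consistent f (pinned A).
Proof.
  intros [Hmap _] HA x Hx. unfold pinned. induction A as [|a A IH]; simpl.
  - apply X_points, Hmap, X_points, Hx.
  - destruct (pt_eq_dec x a) as [->|_]; [left; symmetry; apply HA; now left|].
    apply IH. intros b Hb. apply HA. now right.
Qed.

Definition all_fixed (d : domains) : bool :=
  forallb (fun x => match lookup d x with [y] => pt_eqb y x | _ => false end) points.

Theorem freezing_by_propagation (A : list pt) (n : nat) :
  (forall a, In a A -> X a) ->
  all_fixed (Nat.iter n refine (pinned A)) = true ->
  freezing_set X (fun a => In a A).
Proof.
  intros HAX Hfix. split; [exact HAX|]. intros f Hf HA x Hx.
  assert (Hcons : consistent f (Nat.iter n refine (pinned A)))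
    by (apply iterate_consistent; [exact Hf | now apply pinned_consistent]).
  apply X_points in Hx. specialize (Hcons x Hx).
  unfold all_fixed in Hfix. rewrite forallb_forall in Hfix. specialize (Hfix x Hx).
  destruct (lookup _ x) as [|y [|]]; try discriminate.
  apply pt_eqb_spec in Hfix. destruct Hcons as [<-|[]]. congruence.
Qed.

Definition witnessb (A : list pt) (a : pt) (g : pt -> pt) : bool :=
  continuousb g && negb (pt_eqb (g a) a)
  && forallb (fun b => pt_eqb b a || pt_eqb (g b) b) A.

Lemma witnessb_sound (A : list pt) (a : pt) (g : pt -> pt) :
  witnessb A a g = true ->
  c2_continuous X g /\ g a <> a /\ forall b, In b A -> b <> a -> g b = b.
Proof.
  unfold witnessb. rewrite !andb_true_iff, negb_true_iff, forallb_forall.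
  intros [[Hcont Hmove] Hfix]. split; [now apply continuousb_sound|]. split.
  - intros E. apply pt_eqb_spec in E. congruence.
  - intros b Hb Hba. specialize (Hfix b Hb). apply orb_true_iff in Hfix as [E|E].
    + apply pt_eqb_spec in E. contradiction.
    + now apply pt_eqb_spec.
Qed.

End FiniteDigitalImage.

Definition polygons : list (list pt) :=
  [[(-3, 0); (0, 3); (1, 2); (-2, -1)]; [(1, 2); (3, 0); (2, -1); (0, 1)];
   [(2, -1); (0, -3); (-1, -2); (1, 0)]; [(-1, -2); (-2, -1); (-1, 0); (0, -1)];
   [(5, 0); (7, 2); (8, 1); (6, -1)]; [(7, 2); (8, 3); (9, 2); (9, 0)];
   [(9, 0); (9, -2); (8, -3); (7, -2)]; [(7, -2); (6, -1); (7, 0); (8, -1)]].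

Definition X6_points : list pt :=
  nodup pt_eq_dec ((4, 0) :: flat_map hull_points polygons).

Lemma X6_polygons (p : pt) :
  X6 p <-> p = (4, 0) \/ exists W, In W polygons /\ D W p.
Proof.
  unfold X6, D1, D2, D3, D4, D5, D6, D7, D8. simpl. split.
  - intros [H|H]; [now left|right].
    repeat destruct H as [H|H]; (eexists; split; [|exact H]); simpl; tauto.
  - intros [H|(W & HW & Hp)]; [now left|right].
    repeat destruct HW as [<-|HW]; tauto.
Qed.

Lemma hull_points_certified :
  forallb (fun W => forallb (in_quadb W) (hull_points W)) polygons = true.
Proof. vm_compute. reflexivity. Qed.

Lemma X6_points_spec (p : pt) : X6 p <-> In p X6_points.
Proof.
  unfold X6_points. rewrite X6_polygons, nodup_In. cbn [In]. rewrite in_flat_map.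
  split.
  - intros [->|(W & HW & Hp)]; [now left | right].
    exists W. split; [exact HW | now apply hull_points_complete].
  - intros [<-|(W & HW & Hp)]; [now left | right].
    exists W. split; [exact HW|]. apply in_quadb_sound.
    pose proof hull_points_certified as H. rewrite forallb_forall in H.
    specialize (H W HW). rewrite forallb_forall in H. exact (H p Hp).
Qed.

Definition B'_points : list pt :=
  [(-3, 0); (0, -3); (0, 3); (8, -3); (8, 3); (9, -2); (9, -1); (9, 1); (9, 2)].

Lemma B'_in_X6 (a : pt) : In a B'_points -> X6 a.
Proof.
  intros Ha. apply X6_points_spec, memb_spec. revert a Ha. apply forallb_forall.
  vm_compute. reflexivity.
Qed.

Lemma B'_propagates :
  all_fixed X6_points (Nat.iter 12 (refine X6_points) (pinned B'_points)) = true.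
Proof. vm_compute. reflexivity. Qed.

Fixpoint apply_table (m : list (pt * pt)) (p : pt) : pt :=
  match m with
  | [] => p
  | (k, v) :: m' => if pt_eq_dec p k then v else apply_table m' p
  end.

(* The maps for (-3,0), (0,-3), (0,3) and (8,3) fold a strip of X6
   containing that point onto the adjacent part of X6; the others push a single
   point of B' one step inward. *)
Definition moving_table (a : pt) : list (pt * pt) :=
  match a with
  | (-3, 0) => [((-3, 0), (2, 0)); ((-2, -1), (2, -1)); ((-2, 0), (2, 0));
                ((-2, 1), (2, 1)); ((-1, -2), (1, -2)); ((-1, -1), (2, -1));
                ((-1, 0), (1, 0)); ((-1, 1), (1, 1)); ((-1, 2), (1, 2));
                ((0, -2), (1, -2)); ((0, -1), (2, -1)); ((1, -1), (2, -1))]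
  | (0, -3) => [((-2, -1), (-2, 0)); ((-1, -2), (-1, 1)); ((-1, -1), (-1, 0));
                ((0, -3), (0, 1)); ((0, -2), (0, 1)); ((0, -1), (0, 1));
                ((1, -2), (1, 2)); ((1, -1), (1, 1)); ((2, -1), (2, 1))]
  | (0, 3) => [((-2, 1), (-2, 0)); ((-1, 1), (-1, 0)); ((-1, 2), (-1, 1));
               ((0, 2), (0, 1)); ((0, 3), (0, 1)); ((1, 1), (1, 0));
               ((1, 2), (1, 1)); ((2, 0), (2, -1)); ((2, 1), (2, 0))]
  | (8, -3) => [((8, -3), (8, -2))]
  | (8, 3) => [((6, 0), (6, -1)); ((6, 1), (6, 0)); ((7, 1), (7, 0));
               ((7, 2), (7, 1)); ((8, 2), (8, 1)); ((8, 3), (8, 2))]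
  | (9, -2) => [((9, -2), (8, -2))]
  | (9, -1) => [((9, -1), (8, -1))]
  | (9, 1) => [((9, 1), (8, 1))]
  | (9, 2) => [((9, 2), (8, 2))]
  | _ => []
  end.

Lemma moving_tables_valid :
  forallb (fun a => witnessb X6_points B'_points a (apply_table (moving_table a)))
    B'_points = true.
Proof. vm_compute. reflexivity. Qed.

Theorem mainTheorem6 : minimal_freezing_set X6 B'.
Proof.
  assert (Hfreeze : freezing_set X6 B')
    by exact (freezing_by_propagation X6 X6_points X6_points_spec B'_points 12
                B'_in_X6 B'_propagates).
  apply (minimal_by_witnesses X6 B'_points Hfreeze).
  intros a Ha. exists (apply_table (moving_table a)).
  apply (witnessb_sound X6 X6_points X6_points_spec B'_points).
  pose proof moving_tables_valid as Hvalid. rewrite forallb_forall in Hvalid.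
  exact (Hvalid a Ha).
Qed.
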